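(* Let $G$ be a finite simple graph. The following are equivalent: (i) $G$ is a König–Egerváry graph; (ii) $\operatorname{diadem}(G) = \operatorname{corona}(G)$; (iii) $|\operatorname{diadem}(G)| + |\operatorname{nucleus}(G)| = 2\alpha(G)$.
   Context: For $X\subseteq V(G)$, $N(X)$ is the set of vertices adjacent to some vertex of $X$, and the difference of $X$ is $d(X)=|X|-|N(X)|$. A set $S\subseteq V(G)$ is independent if no two of its vertices are adjacent. An independent set $S$ is a critical independent set if $d(S)=\max\{d(X): X\subseteq V(G)\}$; the empty set may be critical. A maximum critical independent set is a critical independent set of maximum cardinality. $\operatorname{nucleus}(G)$ is the intersection of all maximum critical independent sets of $G$, and $\operatorname{diadem}(G)$ is their union. $\alpha(G)$ is the maximum size of an independent set, with $\alpha$ of the empty graph equal to $0$. $\operatorname{corona}(G)$ is the union of all maximum independent sets of $G$. $\mu(G)$ is the size of a maximum matching. $G$ is König–Egerváry if $\alpha(G)+\mu(G)=|V(G)|$; by convention the empty graph is König–Egerváry. *)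

From mathcomp Require Import all_boot all_order all_algebra.
Set Implicit Arguments. Unset Strict Implicit. Unset Printing Implicit Defensive.
Import GRing.Theory Num.Theory.

(* A finite simple graph: vertex type T : finType, adjacency e : rel T,
   assumed symmetric and irreflexive in the theorem. *)
Section Graph.
Variables (T : finType) (e : rel T).

Definition nbhd (X : {set T}) : {set T} := [set y | [exists x in X, e x y]].

Definition diff (X : {set T}) : int := (#|X|%:Z - #|nbhd X|%:Z)%R.

Definition independent (S : {set T}) : bool :=
  [forall x in S, forall y in S, ~~ e x y].

Definition critical_indep (S : {set T}) : bool :=
  independent S && [forall X : {set T}, (diff X <= diff S)%R].

Definition max_critical_indep (S : {set T}) : bool :=
  critical_indep S && [forall S' : {set T}, critical_indep S' ==> (#|S'| <= #|S|)%N].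

Definition nucleus : {set T} := \bigcap_(S : {set T} | max_critical_indep S) S.
Definition diadem : {set T} := \bigcup_(S : {set T} | max_critical_indep S) S.

Definition alpha : nat := \max_(S : {set T} | independent S) #|S|.

Definition max_indep (S : {set T}) : bool := independent S && (#|S| == alpha).

Definition corona : {set T} := \bigcup_(S : {set T} | max_indep S) S.

Definition matching (M : {set {set T}}) : bool :=
  [forall E in M, exists x, exists y, e x y && (E == [set x; y])] &&
  [forall E in M, forall F in M, (E != F) ==> [disjoint E & F]].

Definition mu : nat := \max_(M : {set {set T}} | matching M) #|M|.

Definition koenig_egervary : Prop := (alpha + mu = #|T|)%N.

End Graph.

From mathcomp Require Import all_boot all_order all_algebra zify.
Set Implicit Arguments. Unset Strict Implicit. Unset Printing Implicit Defensive.

(* Fix a maximum critical independent set I.  Since I is critical, Hall's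
   condition holds from N(I) into I, so a matching f sends N(I) injectively
   into I along edges.  Every critical independent set lies in I ∪ N(I)
   (Larson), and a maximum one, being independent of size |I|, contains the
   vertices of I missed by f and exactly one endpoint of each edge x, f x.
   Hence x is in the diadem iff f x is not in the nucleus and vice versa,
   which yields |diadem| + |nucleus| = 2|I|.  Each of the three conditions
   then amounts to I ∪ N(I) covering all vertices: in that case alpha = |I|
   and the edges x, f x form a maximum matching; otherwise a vertex outside
   I ∪ N(I) extends I, so |I| < alpha, and some maximum independent set
   meets the complement of I ∪ N(I), which the diadem avoids. *)

Section Graph.
Variables (T : finType) (e : rel T).
Hypothesis e_sym : symmetric e.
Hypothesis e_irr : irreflexive e.

Local Notation N := (nbhd e).

Lemma disjointP (A B : {set T}) :
  reflect (forall x, x \in A -> x \in B -> False) [disjoint A & B].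
Proof.
rewrite -setI_eq0; apply: (iffP eqP) => [AB0 x xA xB | H].
  by have := in_set0 x; rewrite -AB0 inE xA xB.
by apply/setP => x; rewrite !inE; apply/negbTE/andP => -[]; apply: H.
Qed.

Lemma cardsU_disjoint (A B : {set T}) :
  [disjoint A & B] -> #|A :|: B| = #|A| + #|B|.
Proof. by move=> dAB; apply/eqP; rewrite (leq_card_setU A B).2. Qed.

Lemma nbhdP (X : {set T}) y : reflect (exists2 x, x \in X & e x y) (y \in N X).
Proof. by rewrite inE; apply: (iffP exists_inP) => -[x]; exists x. Qed.

Lemma mem_nbhd (X : {set T}) x y : x \in X -> e x y -> y \in N X.
Proof. by move=> xX exy; apply/nbhdP; exists x. Qed.

Lemma nbhdS (X Y : {set T}) : X \subset Y -> N X \subset N Y.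
Proof.
move=> sXY; apply/subsetP => y /nbhdP [x xX exy].
exact: mem_nbhd (subsetP sXY x xX) exy.
Qed.

Lemma nbhdU (X Y : {set T}) : N (X :|: Y) = N X :|: N Y.
Proof.
apply/setP => y; rewrite in_setU; apply/nbhdP/orP => [[x] | [] /nbhdP [x xX exy]].
- by rewrite in_setU => /orP [] xX exy; [left | right]; apply: mem_nbhd exy.
- by exists x; rewrite // in_setU xX.
- by exists x; rewrite // in_setU xX orbT.
Qed.

Lemma independentP (S : {set T}) :
  reflect {in S &, forall x y, ~~ e x y} (independent e S).
Proof.
apply: (iffP forall_inP) => [H x y xS | H x xS]; first exact: (forall_inP (H x xS)).
by apply/forall_inP => y; apply: H.
Qed.

Lemma independent_notin_nbhd (S : {set T}) x :
  independent e S -> x \in S -> x \notin N S.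
Proof.
move=> /independentP iS xS; apply/nbhdP => -[y yS eyx].
by have := iS y x yS xS; rewrite eyx.
Qed.

Lemma independent_disjoint_nbhd (S : {set T}) :
  independent e S -> [disjoint S & N S].
Proof.
by move=> iS; apply/disjointP => x xS; apply/negP/independent_notin_nbhd.
Qed.

(** * Hall's theorem *)

Definition matches (f : T -> T) (A B : {set T}) :=
  {in A, forall x, f x \in B /\ e x (f x)} /\ {in A &, injective f}.

Definition hall_condition (A B : {set T}) :=
  forall X : {set T}, X \subset A -> #|X| <= #|N X :&: B|.

Lemma matches_subr f (A B B' : {set T}) :
  B \subset B' -> matches f A B -> matches f A B'.
Proof.
move=> sBB' [fB finj]; split=> // x xA; have [fxB exf] := fB x xA.
by split; first exact: subsetP sBB' _ fxB.
Qed.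

Lemma matches_nbhd f (A B : {set T}) : matches f A B -> matches f A (N A :&: B).
Proof.
move=> [fB finj]; split=> // x xA; have [fxB exf] := fB x xA.
by rewrite in_setI fxB (mem_nbhd xA exf).
Qed.

Lemma matches_setU f1 f2 (A1 A2 B1 B2 : {set T}) : [disjoint B1 & B2] ->
  matches f1 A1 B1 -> matches f2 A2 B2 ->
  matches (fun x => if x \in A1 then f1 x else f2 x) (A1 :|: A2) (B1 :|: B2).
Proof.
move=> dB [f1B f1i] [f2B f2i].
have A2P z : z \in A1 :|: A2 -> z \notin A1 -> z \in A2.
  by rewrite in_setU => /orP [-> | ->].
split=> [x xA | x y xA yA] /=.
  case: ifP => xA1; first by have [fxB ?] := f1B x xA1; rewrite in_setU fxB.
  by have [fxB ?] := f2B x (A2P x xA (negbT xA1)); rewrite in_setU fxB orbT.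
case: ifP => xA1; case: ifP => yA1 fxy.
- exact: f1i.
- have [fxB _] := f1B x xA1; have [fyB _] := f2B y (A2P y yA (negbT yA1)).
  by have := disjointFr dB fxB; rewrite fxy fyB.
- have [fxB _] := f2B x (A2P x xA (negbT xA1)); have [fyB _] := f1B y yA1.
  by have := disjointFr dB fyB; rewrite -fxy fxB.
- exact: f2i (A2P x xA (negbT xA1)) (A2P y yA (negbT yA1)) fxy.
Qed.

Section HallInduction.
Variable n : nat.
Hypothesis IHn : forall A B : {set T},
  #|A| <= n -> hall_condition A B -> exists f, matches f A B.
Variables A B : {set T}.
Hypotheses (cardA : #|A| <= n.+1) (hallAB : hall_condition A B).

Lemma hall_tight (X0 : {set T}) : X0 \proper A -> X0 != set0 ->
  #|N X0 :&: B| <= #|X0| -> exists f, matches f A B.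
Proof.
move=> ltX0A X0n0 tightX0; have sX0A := proper_sub ltX0A.
have [f1 f1X0] : exists f, matches f X0 B.
  apply: IHn => [|X sX]; first by have := proper_card ltX0A; lia.
  exact/hallAB/(subset_trans sX).
have [f2 f2D] : exists f, matches f (A :\: X0) (B :\: N X0).
  apply: IHn => [|Y sY].
    have := cardsID X0 A; rewrite (setIidPr sX0A).
    have : 0 < #|X0| by rewrite card_gt0.
    lia.
  have dYX0 : [disjoint Y & X0].
    by apply/disjointP => x /(subsetP sY); rewrite in_setD => /andP [/negP].
  have sYX0 : Y :|: X0 \subset A by rewrite subUset sX0A (subset_trans sY) ?subsetDl.
  have sNB : (N Y :|: N X0) :&: B \subset (N Y :&: (B :\: N X0)) :|: (N X0 :&: B).
    apply/subsetP => x; rewrite !(in_setU, in_setI, in_setD).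
    by case: (x \in N X0); case: (x \in N Y); case: (x \in B).
  have := hallAB sYX0; rewrite cardsU_disjoint // nbhdU.
  have := subset_leq_card sNB; have := leq_card_setU (N Y :&: (B :\: N X0)) (N X0 :&: B).
  by case=> + _; lia.
exists (fun x => if x \in X0 then f1 x else f2 x).
rewrite -(setID A X0) (setIidPr sX0A).
apply: matches_subr (matches_setU _ (matches_nbhd f1X0) f2D).
  by rewrite subUset subsetIr subsetDl.
by apply/disjointP => x; rewrite in_setI in_setD => /andP [-> _] /andP [].
Qed.

Lemma hall_loose : A != set0 ->
  (forall X : {set T}, X \subset A -> X != set0 -> X != A -> #|X| < #|N X :&: B|) ->
  exists f, matches f A B.
Proof.
case/set0Pn => a aA looseA.
have : 0 < #|N [set a] :&: B| by apply: leq_trans (hallAB _); rewrite ?cards1 ?sub1set.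
rewrite card_gt0 => /set0Pn [b]; rewrite in_setI => /andP [/nbhdP [a']].
rewrite in_set1 => /eqP -> eab bB.
have [f2 f2D] : exists f, matches f (A :\ a) (B :\ b).
  apply: IHn => [|Y sY]; first by have := cardsD1 a A; rewrite aA; lia.
  have [-> | Yn0] := eqVneq Y set0; first by rewrite cards0.
  have sYA : Y \subset A := subset_trans sY (subD1set A a).
  have YnA : Y != A.
    by apply: contraTneq sY => ->; apply/subsetPn; exists a; rewrite ?setD11.
  have := looseA Y sYA Yn0 YnA; rewrite setIDA (cardsD1 b (N Y :&: B)).
  by case: (b \in _); lia.
exists (fun x => if x \in [set a] then b else f2 x).
have ab : matches (fun _ => b) [set a] [set b].
  by split=> [x | x y]; rewrite !inE => /eqP ->; [rewrite eqxx | move=> /eqP].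
rewrite -(setD1K aA); apply: matches_subr (matches_setU _ ab f2D).
  by rewrite subUset sub1set bB subD1set.
by apply/disjointP => x; rewrite !inE => /eqP ->; rewrite eqxx.
Qed.

End HallInduction.

Theorem Hall (A B : {set T}) : hall_condition A B -> exists f, matches f A B.
Proof.
move: {2}#|A| (leqnn #|A|) => n; elim: n A B => [|n IHn] A B cardA hallAB.
  by move: cardA; rewrite leqn0 cards_eq0 => /eqP ->; exists id; split=> x; rewrite inE.
have [-> | An0] := eqVneq A set0; first by exists id; split=> x; rewrite inE.
have [/existsP [X0 /and4P [sX0A X0n0 X0nA tightX0]] | loose] := boolP
  [exists X0 : {set T}, [&& X0 \subset A, X0 != set0, X0 != A & #|N X0 :&: B| <= #|X0|]].
  by apply: (hall_tight IHn cardA hallAB _ X0n0 tightX0); rewrite properEneq X0nA.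
apply: (hall_loose IHn cardA hallAB An0) => X sXA Xn0 XnA; rewrite ltnNge.
by apply: contra loose => tightX; apply/existsP; exists X; rewrite sXA Xn0 XnA.
Qed.

(** * Critical sets *)

Definition diff_le (X Y : {set T}) := #|X| + #|N Y| <= #|Y| + #|N X|.

Lemma diff_leE (X Y : {set T}) : (diff e X <= diff e Y)%R = diff_le X Y.
Proof. by rewrite /diff /diff_le; apply/idP/idP; lia. Qed.

Lemma diff_le_trans : transitive diff_le.
Proof. by move=> Y X Z; rewrite /diff_le; lia. Qed.

Lemma critical_indepP (S : {set T}) :
  reflect (independent e S /\ forall X, diff_le X S) (critical_indep e S).
Proof.
apply: (iffP andP) => -[iS dS]; split=> //.
  by move=> X; rewrite -diff_leE; apply: (forallP dS).
by apply/forallP => X; rewrite diff_leE.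
Qed.

Lemma critical_independent (S : {set T}) : critical_indep e S -> independent e S.
Proof. by case/andP. Qed.

Lemma max_critical_critical (S : {set T}) :
  max_critical_indep e S -> critical_indep e S.
Proof. by case/andP. Qed.

Lemma max_critical_indepP (I : {set T}) : reflect
  (critical_indep e I /\ forall S, critical_indep e S -> #|S| <= #|I|)
  (max_critical_indep e I).
Proof.
apply: (iffP andP) => -[cI mI]; split=> //.
  by move=> S; apply/implyP/(forallP mI).
by apply/forallP => S; apply/implyP/mI.
Qed.

Lemma leq_max_critical (I S : {set T}) :
  max_critical_indep e I -> critical_indep e S -> #|S| <= #|I|.
Proof. by case/max_critical_indepP => _; apply. Qed.

Lemma independent_setD_nbhd (X : {set T}) : independent e (X :\: N X).
Proof.
apply/independentP => x y; rewrite !in_setD => /andP [_ xX] /andP [yNX _].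
by apply: contra yNX; apply: mem_nbhd.
Qed.

Lemma diff_le_setD_nbhd (X : {set T}) : diff_le X (X :\: N X).
Proof.
have sN : N (X :\: N X) \subset N X :\: X.
  apply/subsetP => y /nbhdP [x]; rewrite in_setD => /andP [xNX xX] exy.
  rewrite in_setD (mem_nbhd xX exy) andbT.
  by apply: contra xNX => yX; rewrite e_sym in exy; apply: mem_nbhd exy.
have := subset_leq_card sN; have := cardsID X (N X); have := cardsID (N X) X.
by rewrite setIC /diff_le; lia.
Qed.

Lemma critical_setD_nbhd (A : {set T}) :
  (forall Y, diff_le Y A) -> critical_indep e (A :\: N A).
Proof.
move=> dA; apply/critical_indepP; split; first exact: independent_setD_nbhd.
by move=> Y; apply: diff_le_trans (dA Y) (diff_le_setD_nbhd A).
Qed.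

Lemma exists_critical_indep : exists S, critical_indep e S.
Proof.
pose m (X : {set T}) := #|X| + (#|T| - #|N X|).
have [A _ mA] := @arg_maxnP _ set0 xpredT m isT.
exists (A :\: N A); apply: critical_setD_nbhd => Y.
have := mA Y isT; have := max_card (N Y); have := max_card (N A).
by rewrite /m /diff_le; lia.
Qed.

Lemma exists_max_critical_indep : exists I, max_critical_indep e I.
Proof.
have [S0 cS0] := exists_critical_indep.
have [I cI mI] := @arg_maxnP _ S0 (critical_indep e) (fun S => #|S|) cS0.
by exists I; apply/max_critical_indepP.
Qed.

Lemma critical_hall_condition (I : {set T}) :
  critical_indep e I -> hall_condition (N I) I.
Proof.
move=> /critical_indepP [_ dI] X sX.
pose I0 := I :\: N X.
have sN : N I0 :|: X \subset N I by rewrite subUset sX nbhdS ?subsetDl.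
have dNX : [disjoint N I0 & X].
  apply/disjointP => y /nbhdP [x]; rewrite in_setD => /andP [xNX _] exy yX.
  by rewrite e_sym in exy; rewrite (mem_nbhd yX exy) in xNX.
have := subset_leq_card sN; rewrite cardsU_disjoint //.
by have := dI I0; have := cardsID (N X) I; rewrite setIC /diff_le /I0; lia.
Qed.

Lemma card_independent_setI_closed (I S : {set T}) : critical_indep e I ->
  independent e S -> #|S :&: (I :|: N I)| <= #|I|.
Proof.
move=> cI iS; set X := S :&: N I.
have hX : #|X| <= #|N X :&: I| := critical_hall_condition cI (subsetIr S (N I)).
have sSX : S :&: (I :|: N I) \subset (S :&: I) :|: X by rewrite setIUr subxx.
have sNX : N X :&: I \subset I :\: S.
  apply/subsetP => y; rewrite in_setI in_setD => /andP [yNX ->]; rewrite andbT.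
  exact: contraL (independent_notin_nbhd iS) (subsetP (nbhdS (subsetIl S (N I))) y yNX).
have := subset_leq_card sSX; have := subset_leq_card sNX.
have := (leq_card_setU (S :&: I) X).1; have := cardsID S I.
by rewrite [I :&: S]setIC; lia.
Qed.

Lemma diff_le_setU (I J : {set T}) : critical_indep e I -> critical_indep e J ->
  forall Y, diff_le Y (I :|: J).
Proof.
move=> /critical_indepP [_ dI] /critical_indepP [_ dJ] Y.
apply: diff_le_trans (dJ Y) _.
have sN : N (I :&: J) \subset N I :&: N J.
  by rewrite subsetI !nbhdS ?subsetIl ?subsetIr.
have := subset_leq_card sN; have := cardsUI I J; have := cardsUI (N I) (N J).
by have := dI (I :&: J); rewrite /diff_le nbhdU; lia.
Qed.

(* A := (I :|: J) :\: N (I :|: J) is critical by supermodularity of d, it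
   contains X := J :\: (I :|: N I), and comparing d (A :&: I) with d A bounds
   the neighbours of X outside I :|: N I. *)
Lemma card_nbhd_outside (I J : {set T}) : critical_indep e I -> critical_indep e J ->
  #|N (J :\: (I :|: N I)) :\: (I :|: N I)| <= #|J :\: (I :|: N I)|.
Proof.
move=> cI cJ; have iJ := critical_independent cJ.
set C := I :|: N I; set X := J :\: C; set A := (I :|: J) :\: N (I :|: J).
have /critical_indepP [_ dA] : critical_indep e A.
  exact: critical_setD_nbhd (diff_le_setU cI cJ).
have sXA : X \subset A.
  apply/subsetP => x; rewrite /X /A /C !in_setD nbhdU !in_setU !negb_or.
  case/andP => /andP [_ xNI] xJ; rewrite xJ orbT xNI.
  by rewrite (independent_notin_nbhd iJ xJ).
have sAIX : A \subset (A :&: I) :|: X.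
  apply/subsetP => x; rewrite /A /X /C !(in_setD, in_setU, in_setI) nbhdU in_setU.
  by case: (x \in I); case: (x \in J); case: (x \in N I); case: (x \in N J).
have dNA : [disjoint N (A :&: I) & N X :\: C].
  apply/disjointP => y /(subsetP (nbhdS (subsetIr A I))) yNI.
  by rewrite in_setD in_setU yNI orbT.
have sNA : N (A :&: I) :|: (N X :\: C) \subset N A.
  by rewrite subUset nbhdS ?subsetIl // (subset_trans (subsetDl _ _)) ?nbhdS.
have := dA (A :&: I); have := subset_leq_card sAIX.
have := (leq_card_setU (A :&: I) X).1; have := subset_leq_card sNA.
by rewrite (cardsU_disjoint dNA) /diff_le; lia.
Qed.

Lemma critical_setU_outside (I X : {set T}) : critical_indep e I -> independent e X ->
  [disjoint X & I :|: N I] -> #|N X :\: (I :|: N I)| <= #|X| ->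
  critical_indep e (I :|: X).
Proof.
move=> /critical_indepP [iI dI] iX dX cardNX.
have noedge x y : x \in I -> y \in X -> ~~ e x y.
  move=> xI yX; apply/negP => exy.
  by have := disjointFr dX yX; rewrite in_setU (mem_nbhd xI exy) orbT.
apply/critical_indepP; split.
  apply/independentP => x y; rewrite !in_setU => /orP [xI | xX] /orP [yI | yX].
  - exact: (independentP _ iI).
  - exact: noedge.
  - by rewrite e_sym; apply: noedge.
  - exact: (independentP _ iX).
move=> Y; apply: diff_le_trans (dI Y) _.
have sN : N (I :|: X) \subset N I :|: (N X :\: (I :|: N I)).
  apply/subsetP => z; rewrite nbhdU !in_setU in_setD in_setU.
  case/orP => [-> // | /nbhdP [x xX exz]].
  have zI : z \notin I by apply/negP => zI; have := noedge z x zI xX; rewrite e_sym exz.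
  by rewrite (negbTE zI) (mem_nbhd xX exz) andbT orbN.
have dIX : [disjoint I & X].
  by rewrite disjoint_sym; exact: disjointWr (subsetUl I (N I)) dX.
have := subset_leq_card sN; have := (leq_card_setU (N I) (N X :\: (I :|: N I))).1.
by rewrite /diff_le (cardsU_disjoint dIX); lia.
Qed.

Lemma critical_sub_closed_nbhd (I J : {set T}) :
  max_critical_indep e I -> critical_indep e J -> J \subset I :|: N I.
Proof.
move=> maxI cJ; have cI := max_critical_critical maxI.
set X := J :\: (I :|: N I).
have dX : [disjoint X & I :|: N I].
  by apply/disjointP => x; rewrite in_setD => /andP [/negbTE ->].
have iX : independent e X.
  apply/independentP => x y /setDP [xJ _] /setDP [yJ _].
  exact: (independentP _ (critical_independent cJ)).
have cK := critical_setU_outside cI iX dX (card_nbhd_outside cI cJ).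
have dIX : [disjoint I & X].
  by rewrite disjoint_sym; exact: disjointWr (subsetUl I (N I)) dX.
have := leq_max_critical maxI cK; rewrite (cardsU_disjoint dIX).
by rewrite -{2}[#|I|]addn0 leq_add2l leqn0 cards_eq0 setD_eq0.
Qed.

(** * Independence and matching numbers *)

Lemma alphaP : exists2 S, independent e S & #|S| = alpha e.
Proof.
have indep0 : independent e set0 by apply/independentP => x y; rewrite inE.
exists [arg max_(S > set0 | independent e S) #|S|]; first by case: arg_maxnP.
by rewrite /alpha (bigmax_eq_arg _ indep0).
Qed.

Lemma leq_alpha (S : {set T}) : independent e S -> #|S| <= alpha e.
Proof. exact: (@leq_bigmax_cond _ (independent e) (fun S : {set T} => #|S|)). Qed.

Lemma muP : exists2 M, matching e M & #|M| = mu e.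
Proof.
have matching0 : matching e set0.
  by apply/andP; split; apply/forall_inP => E; rewrite inE.
exists [arg max_(M > set0 | matching e M) #|M|]; first by case: arg_maxnP.
by rewrite /mu (bigmax_eq_arg _ matching0).
Qed.

Lemma leq_mu (M : {set {set T}}) : matching e M -> #|M| <= mu e.
Proof. exact: (@leq_bigmax_cond _ (matching e) (fun M : {set {set T}} => #|M|)). Qed.

Lemma matchingP (M : {set {set T}}) : matching e M ->
  {in M, forall E, exists x y, e x y /\ E = [set x; y]} /\ trivIset M.
Proof.
case/andP => /forall_inP edgeM /forall_inP disjM; split.
  by move=> E /edgeM /existsP [x /existsP [y /andP [exy /eqP ->]]]; exists x, y.
apply/trivIsetP => E F EM FM; exact/implyP/(forall_inP (disjM E EM)).
Qed.

Lemma card_cover_matching (M : {set {set T}}) :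
  matching e M -> #|cover M| = 2 * #|M|.
Proof.
move=> /matchingP [edgeM tM].
have /eqP -> : #|cover M| == \sum_(E in M) #|E| by rewrite (leq_card_cover M).2.
rewrite mulnC -sum_nat_const; apply: eq_bigr => E /edgeM [x [y [exy ->]]].
by rewrite cards2; case: eqP exy => [-> | //]; rewrite e_irr.
Qed.

Lemma matching_partner (M : {set {set T}}) : matching e M -> exists2 p : T -> T,
  {in cover M, forall v, e v (p v)} & {in cover M &, injective p}.
Proof.
move=> /matchingP [edgeM tM].
pose p v := odflt v [pick u | e v u && ([set v; u] \in M)].
have pP v : v \in cover M -> e v (p v) && ([set v; p v] \in M).
  case/bigcupP => E EM vE; have [x [y [exy defE]]] := edgeM E EM.
  have [u evu] : exists u, e v u && ([set v; u] \in M).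
    move: vE; rewrite defE => /set2P [] ->; [exists y | exists x].
      by rewrite exy -defE EM.
    by rewrite e_sym exy setUC -defE EM.
  by rewrite /p; case: pickP => [u' -> // | /(_ u)]; rewrite evu.
exists p => [v /pP /andP [] // | v w vC wC pvw].
have /andP [evp vpM] := pP v vC; have /andP [_ wpM] := pP w wC.
have : [set v; p v] = [set w; p w].
  apply/eqP; apply: contraT => neq.
  by have := disjointFr (trivIsetP tM _ _ vpM wpM neq) (set22 v (p v)); rewrite pvw set22.
move/setP/(_ v); rewrite set21 -pvw => /esym /set2P [// | vp].
by move: evp; rewrite -vp e_irr.
Qed.

Lemma matching_diff_bound (X : {set T}) (M : {set {set T}}) : matching e M ->
  #|X| + 2 * #|M| <= #|T| + #|N X|.
Proof.
move=> mM; rewrite -(card_cover_matching mM); set C := cover M.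
have [p pe pinj] := matching_partner mM.
have sNX : p @: (X :&: C) \subset N X.
  by apply/subsetP => _ /imsetP [v /setIP [vX vC] ->]; apply: mem_nbhd vX (pe v vC).
have cpX : #|p @: (X :&: C)| = #|X :&: C|.
  by apply: card_in_imset => v w /setIP [_ vC] /setIP [_ wC]; apply: pinj.
have sXC : X :\: C \subset ~: C by apply/subsetP => v /setDP [_]; rewrite inE.
have := subset_leq_card sNX; have := subset_leq_card sXC.
by have := cardsID C X; have := cardsC C; lia.
Qed.

Lemma matching_imset_edges f (A B : {set T}) : matches f A B -> [disjoint A & B] ->
  matching e [set [set x; f x] | x in A].
Proof.
move=> [fB finj] dAB; apply/andP; split; apply/forall_inP => _ /imsetP [x xA ->].
  apply/existsP; exists x; apply/existsP; exists (f x).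
  by have [_ ->] := fB x xA; rewrite eqxx.
apply/forall_inP => _ /imsetP [y yA ->]; apply/implyP => neq.
have xy : x != y by apply: contraNneq neq => ->.
have [fxB _] := fB x xA; have [fyB _] := fB y yA.
apply/disjointP => z /set2P [] -> /set2P [].
- by move/eqP; rewrite (negbTE xy).
- by move=> xfy; have := disjointFr dAB xA; rewrite xfy fyB.
- by move=> fxy; have := disjointFr dAB yA; rewrite -fxy fxB.
- by move/(finj x y xA yA)/eqP; rewrite (negbTE xy).
Qed.

Lemma card_imset_edges f (A B : {set T}) : matches f A B -> [disjoint A & B] ->
  #|[set [set x; f x] | x in A]| = #|A|.
Proof.
move=> [fB _] dAB; apply: card_in_imset => x y xA yA /setP /(_ x).
rewrite set21 => /esym /set2P [// | xfy].
by have [fyB _] := fB y yA; have := disjointFr dAB xA; rewrite xfy fyB.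
Qed.

(* Every set has d <= |T| - 2 mu = alpha - mu, while d S >= 2 alpha - |T|. *)
Lemma koenig_egervary_critical (S : {set T}) : koenig_egervary e ->
  independent e S -> #|S| = alpha e -> critical_indep e S.
Proof.
rewrite /koenig_egervary => ke iS cS; have [M mM cM] := muP.
apply/critical_indepP; split=> // Y.
have := matching_diff_bound Y mM; have := max_card (S :|: N S).
by rewrite (cardsU_disjoint (independent_disjoint_nbhd iS)) /diff_le; lia.
Qed.

Lemma mem_nucleusPn v :
  reflect (exists2 J, max_critical_indep e J & v \notin J) (v \notin nucleus e).
Proof.
apply: (iffP idP) => [vC | [J maxJ]]; last by apply: contra => /bigcapP; apply.
have /existsP [J /andP [maxJ vJ]] :
    [exists J : {set T}, max_critical_indep e J && (v \notin J)].
  apply: (contraR _ vC) => /existsPn noJ; apply/bigcapP => J maxJ.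
  by have := noJ J; rewrite maxJ negbK.
by exists J.
Qed.

Lemma nucleus_sub_diadem : nucleus e \subset diadem e.
Proof.
have [I maxI] := exists_max_critical_indep.
exact: subset_trans (bigcap_inf I maxI) (bigcup_sup I maxI).
Qed.

Lemma mem_diadem_edge u v : e u v ->
  (forall J, max_critical_indep e J -> (u \in J) || (v \in J)) ->
  (u \in diadem e) = (v \notin nucleus e).
Proof.
move=> euv uvJ; apply/bigcupP/mem_nucleusPn => -[J maxJ JP]; exists J => //.
  apply: contraL euv => vJ.
  exact: (independentP _ (critical_independent (max_critical_critical maxJ))).
by have := uvJ J maxJ; rewrite (negbTE JP) orbF.
Qed.

(** * The structure around a maximum critical independent set *)

Section MaxCritical.
Variable I : {set T}.
Hypothesis maxI : max_critical_indep e I.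
Variable f : T -> T.
Hypothesis fI : matches f (N I) I.

Local Notation U := (I :\: f @: N I).

Lemma matched_mem x : x \in N I -> f x \in I.
Proof. by case: fI => fB _ /fB []. Qed.

Lemma matched_edge x : x \in N I -> e x (f x).
Proof. by case: fI => fB _ /fB []. Qed.

Lemma card_matched : #|f @: N I| = #|N I|.
Proof. by case: fI => _; apply: card_in_imset. Qed.

Lemma matched_sub : f @: N I \subset I.
Proof. by apply/subsetP => _ /imsetP [x xNI ->]; apply: matched_mem. Qed.

Lemma card_unmatched : #|U| + #|N I| = #|I|.
Proof.
by rewrite -card_matched addnC -(cardsID (f @: N I) I) (setIidPr matched_sub).
Qed.

Lemma independent_I : independent e I.
Proof. exact: critical_independent (max_critical_critical maxI). Qed.

Lemma card_split_closed_nbhd (X : {set T}) : X \subset I :|: N I ->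
  #|X| = #|X :&: N I| + #|X :&: f @: N I| + #|X :&: U|.
Proof.
move=> sX; have disjI := independent_disjoint_nbhd independent_I.
have XNI : X :\: N I = X :&: I.
  apply/setP => v; rewrite in_setD in_setI; case vX: (v \in X); rewrite ?andbF //.
  have := subsetP sX v vX; rewrite in_setU andbT.
  by case vI: (v \in I); rewrite ?(disjointFr disjI vI) //= => ->.
have := cardsID (N I) X; have := cardsID (f @: N I) (X :&: I).
by rewrite XNI -setIA (setIidPr matched_sub) setIDA; lia.
Qed.

Lemma max_critical_structure (J : {set T}) : max_critical_indep e J ->
  U \subset J /\ {in N I, forall x, (x \in J) || (f x \in J)}.
Proof.
move=> maxJ; have cJ := max_critical_critical maxJ.
have iJ := critical_independent cJ.
have cardJ : #|J| = #|I|.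
  apply/eqP; rewrite eqn_leq leq_max_critical //.
  exact: leq_max_critical maxJ (max_critical_critical maxI).
have sJf : J :&: f @: N I \subset f @: (N I :\: J).
  apply/subsetP => y /setIP [yJ /imsetP [x xNI yfx]]; rewrite {}yfx in yJ *.
  rewrite imset_f // in_setD xNI andbT.
  by apply: contraL (matched_edge xNI) => xJ; apply: (independentP _ iJ).
have [eqU eqf] : #|J :&: U| = #|U| /\ #|J :&: f @: N I| = #|f @: (N I :\: J)|.
  have := card_split_closed_nbhd (critical_sub_closed_nbhd maxI cJ).
  have := cardsID J (N I); have := leq_imset_card f (N I :\: J).
  have := subset_leq_card sJf; have := subset_leq_card (subsetIr J U).
  by have := card_unmatched; rewrite [N I :&: J]setIC; lia.
have JfI : J :&: f @: N I = f @: (N I :\: J) by apply/eqP; rewrite eqEcard sJf eqf leqnn.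
split.
  have /eqP <- : J :&: U == U by rewrite -(subset_leqif_cards (subsetIr J U)).2 eqU.
  exact: subsetIl.
move=> x xNI; case: (boolP (x \in J)) => //= xJ.
have : f x \in f @: (N I :\: J) by rewrite imset_f // in_setD xJ xNI.
by rewrite -JfI => /setIP [].
Qed.

Lemma mem_diadem_nbhd x : x \in N I -> (x \in diadem e) = (f x \notin nucleus e).
Proof.
move=> xNI; apply: mem_diadem_edge (matched_edge xNI) _ => J.
by case/max_critical_structure => _; apply.
Qed.

Lemma mem_diadem_matched x : x \in N I -> (f x \in diadem e) = (x \notin nucleus e).
Proof.
move=> xNI; apply: mem_diadem_edge; first by rewrite e_sym matched_edge.
by move=> J /max_critical_structure [_ /(_ x xNI)]; rewrite orbC.
Qed.

Lemma unmatched_sub_nucleus : U \subset nucleus e.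
Proof. by apply/bigcapsP => J /max_critical_structure []. Qed.

Lemma diadem_sub_closed_nbhd : diadem e \subset I :|: N I.
Proof.
apply/bigcupsP => J /max_critical_critical.
exact: critical_sub_closed_nbhd maxI.
Qed.

Lemma imset_setI_nbhd (D C : {set T}) : {in N I, forall x, (x \in D) = (f x \notin C)} ->
  f @: (D :&: N I) = f @: N I :\: C.
Proof.
move=> DC; apply/setP => y; apply/imsetP/setDP.
  by case=> x /setIP [xD xNI] ->; rewrite -DC // imset_f.
case=> /imsetP [x xNI ->] fxC.
by exists x; rewrite // in_setI xNI andbT DC.
Qed.

Lemma card_imset_setI_nbhd (D : {set T}) : #|f @: (D :&: N I)| = #|D :&: N I|.
Proof.
case: fI => _ finj; apply: card_in_imset => x y /setIP [_ xNI] /setIP [_ yNI].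
exact: finj.
Qed.

Lemma card_diadem_nucleus : #|diadem e| + #|nucleus e| = 2 * #|I|.
Proof.
have sD := diadem_sub_closed_nbhd; have sC := subset_trans nucleus_sub_diadem sD.
have := card_split_closed_nbhd sD; have := card_split_closed_nbhd sC.
have := card_imset_setI_nbhd (diadem e); rewrite (imset_setI_nbhd mem_diadem_nbhd).
have := card_imset_setI_nbhd (nucleus e).
rewrite (@imset_setI_nbhd (nucleus e) (diadem e)); last first.
  by move=> x xNI; rewrite mem_diadem_matched // negbK.
have := cardsID (nucleus e) (f @: N I); have := cardsID (diadem e) (f @: N I).
rewrite (setIidPr unmatched_sub_nucleus).
rewrite (setIidPr (subset_trans unmatched_sub_nucleus nucleus_sub_diadem)).
rewrite [f @: N I :&: nucleus e]setIC [f @: N I :&: diadem e]setIC.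
by have := card_matched; have := card_unmatched; lia.
Qed.

Lemma alpha_closed_nbhd : I :|: N I = setT -> alpha e = #|I|.
Proof.
move=> cov; apply/eqP; rewrite eqn_leq leq_alpha ?independent_I // andbT.
have [S iS <-] := alphaP.
have := card_independent_setI_closed (max_critical_critical maxI) iS.
by rewrite cov setIT.
Qed.

Lemma alpha_gt_not_closed_nbhd : I :|: N I != setT -> #|I| < alpha e.
Proof.
move=> ncov; have /subsetPn [v _] : ~~ ([set: T] \subset I :|: N I) by rewrite subTset.
rewrite in_setU negb_or => /andP [vI vNI].
have iK : independent e (v |: I).
  apply/independentP => x y /setU1P [-> | xI] /setU1P [-> | yI].
  - by rewrite e_irr.
  - by rewrite e_sym; exact: contra (mem_nbhd yI) vNI.
  - exact: contra (mem_nbhd xI) vNI.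
  - exact: (independentP _ independent_I).
by have := leq_alpha iK; rewrite cardsU1 vI.
Qed.

Lemma alpha_closed_nbhdE : alpha e = #|I| <-> I :|: N I = setT.
Proof.
split=> [alphaI | ]; last exact: alpha_closed_nbhd.
by apply/eqP; apply: contraT => /alpha_gt_not_closed_nbhd; rewrite alphaI ltnn.
Qed.

Lemma koenig_egervary_closed_nbhd : koenig_egervary e <-> I :|: N I = setT.
Proof.
split=> [ke | cov].
  apply/alpha_closed_nbhdE/eqP; rewrite eqn_leq leq_alpha ?independent_I // andbT.
  have [S iS cS] := alphaP; rewrite -cS.
  exact: leq_max_critical maxI (koenig_egervary_critical ke iS cS).
have dNI : [disjoint N I & I].
  by rewrite disjoint_sym; exact: independent_disjoint_nbhd independent_I.
have cardT : #|T| = #|I| + #|N I|.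
  by rewrite -cardsU_disjoint ?independent_disjoint_nbhd ?independent_I // cov cardsT.
rewrite /koenig_egervary (alpha_closed_nbhd cov).
have := leq_mu (matching_imset_edges fI dNI); rewrite (card_imset_edges fI dNI).
have [M mM <-] := muP; have := matching_diff_bound I mM.
by rewrite cardT; lia.
Qed.

Lemma diadem_corona_closed_nbhd : diadem e = corona e <-> I :|: N I = setT.
Proof.
split=> [DC | cov].
  apply/eqP; apply: contraT => ncov; have [S iS cS] := alphaP.
  have /subsetPn [v vS vn] : ~~ (S \subset I :|: N I).
    apply: contraL (alpha_gt_not_closed_nbhd ncov) => sS.
    rewrite -leqNgt -cS -(setIidPl sS).
    exact: card_independent_setI_closed (max_critical_critical maxI) iS.
  have : v \in corona e by apply/bigcupP; exists S; rewrite // /max_indep iS cS eqxx.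
  by rewrite -DC => /(subsetP diadem_sub_closed_nbhd) vC; rewrite vC in vn.
have ke := koenig_egervary_closed_nbhd.2 cov.
apply: eq_bigl => S; apply/idP/idP => [maxS | /andP [iS /eqP cS]].
  have cS := max_critical_critical maxS.
  rewrite /max_indep (critical_independent cS) (alpha_closed_nbhd cov) /=.
  by rewrite eqn_leq !leq_max_critical // max_critical_critical.
apply/max_critical_indepP; split; first exact: koenig_egervary_critical.
by move=> S' /critical_independent /leq_alpha; rewrite cS.
Qed.

End MaxCritical.

End Graph.

Theorem theorem1p6 (T : finType) (e : rel T)
  (e_sym : symmetric e) (e_irr : irreflexive e) :
  (koenig_egervary e <-> diadem e = corona e) /\
  (koenig_egervary e <-> (#|diadem e| + #|nucleus e| = 2 * alpha e)%N).
Proof.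
have [I maxI] := exists_max_critical_indep e_sym.
have [f fI] := Hall (critical_hall_condition e_sym (max_critical_critical maxI)).
have ke := koenig_egervary_closed_nbhd e_sym e_irr maxI fI.
have dc := diadem_corona_closed_nbhd e_sym e_irr maxI fI.
have al := alpha_closed_nbhdE e_sym e_irr maxI.
have count : 2 * #|I| = 2 * alpha e <-> alpha e = #|I| by split; lia.
rewrite (card_diadem_nucleus e_sym maxI fI); tauto.
Qed.
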